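(* For all integers $r\ge 3$ and $n_1\ge n_2\ge\dots\ge n_r\ge 2$, $$\iota_0(r-2,n_1,\dots,n_r)=n_1+n_2+\dots+n_r-r+1.$$
   Context: Let $X_\ell=[n_\ell]$ for $1\le\ell\le r$. For $A,B\in X_1\times\dots\times X_r$, write $A\cap B=\{\ell\in[r]:A[\ell]=B[\ell]\}$, where $A[\ell]$ is the $\ell$-th coordinate. A family $\mathcal F\subseteq X_1\times\dots\times X_r$ is $t$-intersecting if $|A\cap B|\ge t$ for all $A,B\in\mathcal F$. Let $\bigcap\mathcal F=\{\ell\in[r]:\text{all members of }\mathcal F\text{ have the same }\ell\text{-th coordinate}\}$. A $t$-intersecting family is non-trivial if $|\bigcap\mathcal F|<t$. For integers $r>t\ge1$ and $n_1\ge\dots\ge n_r\ge 2$, $\iota_0(t,n_1,\dots,n_r)$ denotes the maximum size of a non-trivial $t$-intersecting family $\mathcal F\subseteq X_1\times\dots\times X_r$. *)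

From mathcomp Require Import all_boot.
Set Implicit Arguments. Unset Strict Implicit. Unset Printing Implicit Defensive.

(* Points of X_1 x ... x X_r with X_l = [n_l], coordinates indexed by 'I_r
   and the l-th coordinate in 'I_(n l) (i.e. {0,...,n_l - 1}, a copy of [n_l]). *)
Notation point r n := {dffun forall i : 'I_r, 'I_(n i)}.

Section Defs.
Variables (r : nat) (n : 'I_r -> nat).

(* A ∩ B = set of coordinates where A and B agree *)
Definition agree (A B : point r n) : {set 'I_r} := [set l | A l == B l].

Definition t_intersecting (t : nat) (F : {set point r n}) : Prop :=
  forall A B, A \in F -> B \in F -> t <= #|agree A B|.

(* ⋂F = coordinates on which all members of F agree *)
Definition bigcapF (F : {set point r n}) : {set 'I_r} :=
  [set l | [forall A in F, forall B in F, A l == B l]].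

Definition nontrivial (t : nat) (F : {set point r n}) : Prop :=
  #|bigcapF F| < t.

Definition is_iota0 (t m : nat) : Prop :=
  (exists F : {set point r n}, [/\ t_intersecting t F, nontrivial t F & #|F| = m]) /\
  (forall F : {set point r n}, t_intersecting t F -> nontrivial t F -> #|F| <= m).
End Defs.

From mathcomp Require Import all_boot zify.
Set Implicit Arguments. Unset Strict Implicit. Unset Printing Implicit Defensive.

(* Being (r-2)-intersecting means having Hamming diameter at most 2.  The
   Hamming ball of radius 1 around a point has 1 + sum_l (n_l - 1) elements,
   diameter 2, and no coordinate on which all its members agree.
   Conversely, let F have diameter at most 2 and not lie in such a ball.  Two
   members A, B then differ in exactly two coordinates i, j, and
   non-triviality gives E in F differing from A at some k outside {i, j}; the
   diameter bound forces A, B, E to be the neighbours of a common centre C in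
   the directions i, j, k.  A member of F outside the ball around C must then
   be the apex T obtained from C by all three moves, and a member inside it is
   within distance 2 of T only if it is A, B or E.  So F lies in the ball
   around C or in {A, B, E, T}, and 4 <= 1 + r <= 1 + sum_l (n_l - 1). *)

Section FinsetCard.
Variable T : finType.
Implicit Types (S : {set T}) (x y z : T).

Lemma card_le1_set1 S x : x \in S -> #|S| <= 1 -> S = [set x].
Proof. by move=> xS /card_le1P/(_ x xS) Sx; apply/setP => y; rewrite Sx inE. Qed.

Lemma card_le1_subset1 S x0 : #|S| <= 1 -> exists x, S \subset [set x].
Proof.
case: (set_0Vmem S) => [-> _ | [x xS] /(card_le1_set1 xS) ->]; last by exists x.
by exists x0; rewrite sub0set.
Qed.

Lemma cards3 x y z : x != y -> y != z -> x != z -> #|[set x; y; z]| = 3.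
Proof. by move=> xy yz xz; rewrite -setUA cardsU1 cards2 yz !inE negb_or xy xz. Qed.

Lemma card_ge3 S x y z : x != y -> y != z -> x != z ->
  x \in S -> y \in S -> z \in S -> 3 <= #|S|.
Proof.
move=> xy yz xz xS yS zS; rewrite -(cards3 xy yz xz).
by apply: subset_leq_card; apply/subsetP => u; rewrite !inE => /orP [/orP []|] /eqP ->.
Qed.

End FinsetCard.

Section Hamming.
Variables (r : nat) (n : 'I_r -> nat).
Implicit Types (X Y A B C E : point r n) (D : {set 'I_r}).

Definition differ X Y : {set 'I_r} := ~: agree X Y.

Definition hdist X Y : nat := #|differ X Y|.

Lemma in_differ X Y l : (l \in differ X Y) = (X l != Y l).
Proof. by rewrite !inE. Qed.

Lemma differC X Y : differ X Y = differ Y X.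
Proof. by apply/setP => l; rewrite !in_differ eq_sym. Qed.

Lemma differ_eq0 X Y : (differ X Y == set0) = (X == Y).
Proof.
apply/eqP/eqP => [XY|->]; last by apply/setP => l; rewrite in_differ eqxx inE.
by apply/ffunP => l; apply/eqP; apply: contraT; rewrite -in_differ XY inE.
Qed.

Lemma eq_off_differ X Y D l : differ X Y \subset D -> l \notin D -> X l = Y l.
Proof.
by move=> /subsetP sXY lD; apply/eqP; apply: contraR lD; rewrite -in_differ => /sXY.
Qed.

Lemma eq_of_differ_sub X Y C D : differ X C \subset D -> differ Y C \subset D ->
  (forall l, l \in D -> X l = Y l) -> X = Y.
Proof.
move=> sX sY eqD; apply/ffunP => l; case: (boolP (l \in D)) => [/eqD //| lD].
by rewrite (eq_off_differ sX) // (eq_off_differ sY).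
Qed.

Lemma hdist_triangle X Y Z : hdist X Z <= hdist X Y + hdist Y Z.
Proof.
apply: leq_trans (leq_card_setU _ _); apply/subset_leq_card/subsetP => l.
by rewrite in_setU !in_differ -negb_and; apply: contra => /andP [/eqP -> /eqP ->].
Qed.

Lemma t_intersecting_hdist (F : {set point r n}) :
  t_intersecting (r - 2) F <-> {in F &, forall X Y, hdist X Y <= 2}.
Proof.
have agree_hdist X Y : #|agree X Y| + hdist X Y = r by rewrite cardsC card_ord.
by split=> hF X Y hX hY; have := hF X Y hX hY; have := agree_hdist X Y; lia.
Qed.

(* Off coordinate [i], distances to [A] and to [C] are counted alike. *)
Lemma hdist_shift X A C i : differ A C \subset [set i] ->
  hdist X A + (X i != C i) = hdist X C + (X i != A i).
Proof.
move=> sAC; rewrite /hdist (cardsD1 i (differ X A)) (cardsD1 i (differ X C)) !in_differ.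
suff -> : differ X A :\ i = differ X C :\ i by lia.
apply/setP => l; rewrite !inE; case: eqP => //= /eqP li.
by rewrite (eq_off_differ sAC) // inE.
Qed.

Lemma setC_subset_bigcapF (F : {set point r n}) A D : A \in F ->
  (forall X, X \in F -> differ X A \subset D) -> ~: D \subset bigcapF F.
Proof.
move=> hA sF; apply/subsetP => l; rewrite inE => lD; rewrite inE.
apply/forall_inP => X hX; apply/forall_inP => Y hY.
by rewrite (eq_off_differ (sF X hX)) ?(eq_off_differ (sF Y hY)).
Qed.

Definition set_coord C m (v : 'I_(n m)) : point r n :=
  [ffun l => @dfwith _ (fun l => 'I_(n l)) (fun l => C l) m v l].
Arguments set_coord C m v : clear implicits.

Lemma set_coord_at C m v : set_coord C m v m = v.
Proof. by rewrite ffunE dfwith_in. Qed.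

Lemma set_coord_out C m v l : l != m -> set_coord C m v l = C l.
Proof. by move=> lm; rewrite ffunE dfwith_out // eq_sym. Qed.

Lemma differ_set_coord_sub C m v : differ (set_coord C m v) C \subset [set m].
Proof.
apply/subsetP => l; rewrite in_differ inE; apply: contraR => lm.
by rewrite set_coord_out.
Qed.

Lemma differ_set_coord C m v : v != C m -> differ (set_coord C m v) C = [set m].
Proof.
move=> vC; apply/eqP; rewrite eqEsubset differ_set_coord_sub sub1set.
by rewrite in_differ set_coord_at.
Qed.

Lemma set_coordK X C m : differ X C \subset [set m] -> set_coord C m (X m) = X.
Proof.
move=> sXC; apply: (eq_of_differ_sub (differ_set_coord_sub C (X m)) sXC) => l.
by rewrite inE => /eqP ->; rewrite set_coord_at.
Qed.

Definition ball1 C : {set point r n} := [set X | hdist X C <= 1].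

Lemma ball1_center C : C \in ball1 C.
Proof. by move: (eqxx C); rewrite -differ_eq0 inE /hdist => /eqP ->; rewrite cards0. Qed.

Lemma set_coord_ball1 C m v : set_coord C m v \in ball1 C.
Proof. by rewrite inE (leq_trans (subset_leq_card (differ_set_coord_sub C v))) ?cards1. Qed.

Lemma ball1E C : ball1 C = C |: \bigcup_m set_coord C m @: [set~ C m].
Proof.
apply/setP => X; rewrite in_setU1; apply/idP/orP.
- rewrite inE; case: (set_0Vmem (differ X C)) => [X0 _ | [m mX]].
    by left; rewrite -differ_eq0 X0.
  move/(card_le1_set1 mX) => XCm; right; apply/bigcupP; exists m => //.
  apply/imsetP; exists (X m); last by rewrite set_coordK ?XCm.
  by rewrite !inE -in_differ XCm set11.
- case=> [/eqP -> | /bigcupP [m _ /imsetP [v _ ->]]].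
    exact: ball1_center.
  exact: set_coord_ball1.
Qed.

Lemma card_ball1 C : #|ball1 C| = 1 + \sum_m (n m).-1.
Proof.
rewrite ball1E cardsU1; congr (_ + _).
  apply/eqP; rewrite eqb1; apply/bigcupP => -[m _ /imsetP [v]].
  rewrite !inE => vC /(congr1 (fun X => X m)); rewrite set_coord_at => Cm.
  by rewrite Cm eqxx in vC.
rewrite -sum1_card (partition_disjoint_bigcup addn (fun=> 1)) => [|m m' mm'].
  apply: eq_bigr => m _; rewrite sum1_card card_in_imset ?cardsC1 ?card_ord //.
  by move=> v w _ _ /(congr1 (fun X => X m)); rewrite !set_coord_at.
rewrite -setI_eq0; apply/eqP/setP => X; rewrite !inE; apply/negP.
case/andP => /imsetP [v]; rewrite !inE => vC -> /imsetP [w]; rewrite !inE => wC.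
move/(congr1 (fun X => differ X C)); rewrite !differ_set_coord //.
by move/set1_inj => eqm; rewrite eqm eqxx in mm'.
Qed.

Lemma ball1_hdist_le2 C : {in ball1 C &, forall X Y, hdist X Y <= 2}.
Proof.
move=> X Y; rewrite !inE => hX hY.
by rewrite (leq_trans (hdist_triangle X C Y)) // /hdist [differ C Y]differC (leq_add hX hY).
Qed.

Lemma bigcapF_ball1 C : (forall l, 1 < n l) -> bigcapF (ball1 C) = set0.
Proof.
move=> hn; apply/setP => l; rewrite !inE; apply/negP => /forall_inP agreeF.
have [v vC] : exists v, v \in [set~ C l].
  by apply/card_gt0P; rewrite cardsC1 card_ord -ltnS prednK // ltnW.
have := agreeF _ (ball1_center C); move/forall_inP/(_ _ (set_coord_ball1 C v)).
by move: vC; rewrite set_coord_at in_setC1 eq_sym => /negbTE ->.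
Qed.

Section Diameter2.
Variable F : {set point r n}.
Hypothesis hF : {in F &, forall X Y, hdist X Y <= 2}.

Section Triangle.
Variables (C A B E : point r n) (i j k : 'I_r).
Hypotheses (hA : A \in F) (hB : B \in F) (hE : E \in F).
Hypotheses (dA : differ A C = [set i]) (dB : differ B C = [set j])
  (dE : differ E C = [set k]).
Hypotheses (ij : i != j) (jk : j != k) (ik : i != k).

Lemma off_ball1_apex X : X \in F -> X \notin ball1 C ->
  [/\ differ X C = [set i; j; k], X i = A i, X j = B j & X k = E k].
Proof.
move=> hX; rewrite inE -ltnNge => XC2.
have shift Z m : Z \in F -> differ Z C = [set m] ->
    Z m != C m /\ hdist X C + (X m != Z m) <= 2 + (m \in differ X C).
  move=> hZ dZ; split; first by rewrite -in_differ dZ set11.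
  have sZ : differ Z C \subset [set m] by rewrite dZ.
  by rewrite in_differ -hdist_shift // leq_add2r hF.
have inS Z m : Z \in F -> differ Z C = [set m] -> m \in differ X C.
  move=> hZ dZ; apply: contraT => mS; have [ZC] := shift Z m hZ dZ.
  have -> : X m != Z m by move: mS; rewrite in_differ negbK => /eqP ->; rewrite eq_sym.
  (* [lia] is slow in contexts full of point equations, hence the [clear]s. *)
  by move: XC2; rewrite (negbTE mS); clear; lia.
have S3 : 3 <= hdist X C.
  exact: card_ge3 ij jk ik (inS A i hA dA) (inS B j hB dB) (inS E k hE dE).
have eqZ Z m : Z \in F -> differ Z C = [set m] -> X m = Z m.
  move=> hZ dZ; have [_] := shift Z m hZ dZ; rewrite (inS Z m hZ dZ).
  by case: eqP => // _ /= le3; exfalso; move: S3 le3; clear; lia.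
split; [|exact: eqZ|exact: eqZ|exact: eqZ].
apply/eqP; rewrite eq_sym eqEcard cards3 //; apply/andP; split.
  apply/subsetP => l; rewrite in_setU => /orP [/set2P [] | /set1P] ->;
    [exact: inS hA dA | exact: inS hB dB | exact: inS hE dE].
by have [_] := shift A i hA dA; rewrite (inS A i hA dA) (eqZ A i hA dA) eqxx addn0.
Qed.

Lemma in_ball1_vertex X Y : X \in F -> X \notin ball1 C ->
  Y \in F -> Y \in ball1 C -> Y \in [:: A; B; E].
Proof.
move=> hX nX hY; rewrite inE => /(card_le1_subset1 i) [m sY].
have [dX Xi Xj Xk] := off_ball1_apex hX nX.
have XC3 : hdist X C = 3 by rewrite /hdist dX cards3.
have := hdist_shift X sY; rewrite XC3.
case: (X m =P C m) => [_|XCm]; case: (X m =P Y m) => [XYm|_] /= shift;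
  do ?[by have := hF hX hY; move: shift; clear; lia].
have vertex Z : differ Z C = [set m] -> Z m = X m -> Y = Z.
  move=> dZ ZX; have sZ : differ Z C \subset [set m] by rewrite dZ.
  by apply: (eq_of_differ_sub sY sZ) => l /set1P ->; rewrite -XYm ZX.
have : m \in differ X C by rewrite in_differ; apply/eqP.
rewrite dX in_setU => /orP [/set2P [] | /set1P] mE; rewrite !inE; subst m.
- by rewrite (vertex A) ?eqxx.
- by rewrite (vertex B) ?eqxx ?orbT.
- by rewrite (vertex E) ?eqxx ?orbT.
Qed.

Lemma triangle_subset_ball1_or_small : F \subset ball1 C \/ #|F| <= 4.
Proof.
case: (boolP (F \subset ball1 C)) => [|/subsetPn [X hX nX]]; [by left | right].
suff sF : F \subset [:: X; A; B; E] by exact: leq_trans (subset_leq_card sF) (card_size _).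
apply/subsetP => Y hY; case: (boolP (Y \in ball1 C)) => [bY | nY].
  by rewrite inE (in_ball1_vertex hX nX hY bY) orbT.
have [dX Xi Xj Xk] := off_ball1_apex hX nX.
have [dY Yi Yj Yk] := off_ball1_apex hY nY.
suff -> : Y = X by rewrite inE eqxx.
apply: (eq_of_differ_sub (C := C) (D := [set i; j; k])); [by rewrite dY | by rewrite dX |].
by move=> l; rewrite in_setU => /orP [/set2P [] | /set1P] ->; congruence.
Qed.

End Triangle.

(* The centre is [A] with its [j]-coordinate taken from [B]. *)
Lemma triangle_of_pair A B E i j k : A \in F -> B \in F -> E \in F -> i != j ->
  differ B A = [set i; j] -> k \in differ E A -> k \notin [set i; j] -> E i = A i ->
  exists C, [/\ differ A C = [set j], differ B C = [set i] & differ E C = [set k]].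
Proof.
move=> hA hB hE ij dBA kEA; rewrite !inE negb_or => /andP [ki kj] Ei.
have Bi : B i != A i by rewrite -in_differ dBA !inE eqxx.
have Bj : B j != A j by rewrite -in_differ dBA !inE eqxx orbT.
have Bk : B k = A k.
  by apply: (eq_off_differ (D := [set i; j])); rewrite ?dBA // !inE negb_or ki kj.
have Ej : E j = B j.
  apply/eqP; apply: contraT => EBj.
  have iEB : i \in differ E B by rewrite in_differ Ei eq_sym.
  have jEB : j \in differ E B by rewrite in_differ.
  have kEB : k \in differ E B by rewrite in_differ Bk -in_differ.
  have : 3 <= hdist E B by apply: card_ge3 iEB jEB kEB; rewrite // eq_sym.
  by move: (hF hE hB); clear; lia.
exists (set_coord A j (B j)); set C := set_coord A j (B j).
have sCA : differ C A \subset [set j] by exact: differ_set_coord_sub.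
have Cj : C j = B j by exact: set_coord_at.
have Coff l : l != j -> C l = A l by exact: set_coord_out.
split; first by rewrite differC differ_set_coord.
- have BC1 : hdist B C <= 1.
    have BA2 : hdist B A = 2 by rewrite /hdist dBA cards2 ij.
    by have := hdist_shift B sCA; rewrite Cj eqxx Bj BA2; clear; lia.
  by apply: card_le1_set1 _ BC1; rewrite in_differ Coff.
- have EC1 : hdist E C <= 1.
    by have := hdist_shift E sCA; rewrite Cj Ej eqxx Bj; move: (hF hE hA); clear; lia.
  by apply: card_le1_set1 _ EC1; rewrite in_differ Coff // -in_differ.
Qed.

Lemma diameter2_structure : #|bigcapF F| < r - 2 ->
  (exists C, F \subset ball1 C) \/ #|F| <= 4.
Proof.
move=> nontriv; case: (set_0Vmem F) => [->|[A hA]]; first by right; rewrite cards0.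
case: (boolP (F \subset ball1 A)) => [sFA|/subsetPn [B hB]]; first by left; exists A.
rewrite inE -ltnNge => BA2.
have /cards2P [i [j [ij dBA]]] : #|differ B A| == 2 by rewrite eqn_leq hF.
have [E hE /subsetPn [k kEA kij]] : exists2 E, E \in F & ~~ (differ E A \subset [set i; j]).
  case: (boolP [forall E in F, differ E A \subset [set i; j]]) => [/forall_inP sF|].
    have := subset_leq_card (setC_subset_bigcapF hA sF); have := cardsC [set i; j].
    by rewrite card_ord cards2 ij; move: nontriv; clear; lia.
  by case/forall_inPn => E hE nE; exists E.
have triangle C p q : differ A C = [set p] -> differ B C = [set q] ->
    differ E C = [set k] -> p != q -> q != k -> p != k ->
    (exists C, F \subset ball1 C) \/ #|F| <= 4.
  move=> dA dB dE pq qk pk.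
  case: (triangle_subset_ball1_or_small hA hB hE dA dB dE pq qk pk); last by right.
  by left; exists C.
move: (kij); rewrite !inE negb_or => /andP [ki kj].
case: (eqVneq (E i) (A i)) => [Ei | nEi].
  have [C [dA dB dE]] := triangle_of_pair hA hB hE ij dBA kEA kij Ei.
  by apply: (triangle C j i); rewrite // eq_sym.
have Ej : E j = A j.
  apply/eqP; apply: contraT => nEj.
  have : 3 <= hdist E A by apply: (card_ge3 ij _ _ _ _ kEA); rewrite ?in_differ // eq_sym.
  by move: (hF hE hA); clear; lia.
have ji : j != i by rewrite eq_sym.
have dBA' : differ B A = [set j; i] by rewrite dBA setUC.
have kji : k \notin [set j; i] by rewrite setUC.
have [C [dA dB dE]] := triangle_of_pair hA hB hE ji dBA' kEA kji Ej.
by apply: (triangle C i j); rewrite // eq_sym.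
Qed.

Lemma card_diameter2_nontrivial : (forall m, 1 < n m) -> 3 <= r ->
  #|bigcapF F| < r - 2 -> #|F| <= 1 + \sum_m (n m).-1.
Proof.
move=> hn r3 /diameter2_structure [[C sFC] | F4].
  by rewrite -(card_ball1 C) subset_leq_card.
apply: (leq_trans F4); rewrite -[4]/(1 + 3) leq_add2l (leq_trans r3) //.
rewrite -[X in X <= _](card_ord r) -sum1_card; apply: leq_sum => m _.
by rewrite ltn_predRL hn.
Qed.

End Diameter2.
End Hamming.

Theorem theorem1p4 (r : nat) (n : 'I_r -> nat) :
  3 <= r ->
  (forall i j : 'I_r, i <= j -> n j <= n i) ->
  (forall i : 'I_r, 2 <= n i) ->
  is_iota0 n (r - 2) ((\sum_(i < r) n i) - r + 1).
Proof.
move=> r3 _ hn.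
have -> : \sum_(i < r) n i - r + 1 = 1 + \sum_m (n m).-1.
  have -> : \sum_(i < r) n i = \sum_(i < r) (n i).-1 + \sum_(i < r) 1.
    by rewrite -big_split; apply: eq_bigr => i _ /=; rewrite addn1 prednK // ltnW.
  by rewrite sum1_card card_ord addnK addnC.
split=> [|F /t_intersecting_hdist hF]; last exact: card_diameter2_nontrivial.
pose C : point r n := [ffun l => Ordinal (ltnW (hn l))].
exists (ball1 C); split; first exact/t_intersecting_hdist/ball1_hdist_le2.
  by rewrite /nontrivial bigcapF_ball1 // cards0 subn_gt0.
exact: card_ball1.
Qed.
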